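(* Let $M$ be a countable transitive model of $\mathrm{ZFU}_R$, $\mathbb{P}\in M$ a forcing poset, and $f\in M$ a function whose domain is an antichain of $\mathbb{P}$ and whose values lie in $M^{\mathbb{P}}$. Then there is $\dot v\in M^{\mathbb{P}}$ such that $p\Vdash\dot v=f(p)$ for every $p\in dom(f)$.
   Context: $\mathrm{ZFU}_R$ is ZF with urelements (language $\{\in,\mathcal{A}\}$, $\mathcal{A}$ the urelement predicate, Extensionality only for sets) formulated with Replacement rather than Collection, without AC. A $\mathbb{P}$-name is a set $\dot x$ of ordered pairs $\langle y,p\rangle$ with $p\in\mathbb{P}$ and $y$ either a $\mathbb{P}$-name or a urelement, such that whenever $\langle a,p\rangle,\langle y,q\rangle\in\dot x$ with $a$ a urelement and $a\neq y$, $p$ and $q$ are incompatible. $M^{\mathbb{P}}$ is the set of $\mathbb{P}$-names in $M$. For an $M$-generic filter $G$ and $\dot x\in M^{\mathbb{P}}$: $\dot x_G=a$ if $a$ is a urelement with $\langle a,p\rangle\in\dot x$ for some $p\in G$; otherwise $\dot x_G=\{\dot y_G:\langle\dot y,p\rangle\in\dot x,\ \dot y\in M^{\mathbb{P}},\ p\in G\}$. $M[G]=\{\dot x_G:\dot x\in M^{\mathbb{P}}\}$. $p\Vdash\varphi(\dot x_1,\dots,\dot x_n)$ means that for every $M$-generic $G$ with $p\in G$, $M[G]\models\varphi(\dot x_{1G},\dots,\dot x_{nG})$. *)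

(* The ambient (meta-)universe is an abstract type V with a membership
   relation [mem] and an urelement predicate [atom], assumed to satisfy
   the axioms of ZFU (record [Ambient]). *)
From Stdlib Require Import Arith.

Section ZFU.

Context {V : Type} (mem : V -> V -> Prop) (atom : V -> Prop).

Definition isSet (x : V) : Prop := ~ atom x.

Record Ambient : Prop := {
  amb_ext : forall x y, isSet x -> isSet y -> (forall z, mem z x <-> mem z y) -> x = y;
  amb_atom_empty : forall a z, atom a -> ~ mem z a;
  amb_wf : well_founded (fun z x => mem z x);
  amb_pair : forall x y, exists z, isSet z /\ forall w, mem w z <-> (w = x \/ w = y);
  amb_union : forall x, exists u, isSet u /\
      forall z, mem z u <-> exists y, mem y x /\ mem z y;
  amb_power : forall x, exists p, isSet p /\
      forall y, mem y p <-> (isSet y /\ forall z, mem z y -> mem z x);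
  amb_sep : forall (Q : V -> Prop) a, exists b, isSet b /\
      forall z, mem z b <-> (mem z a /\ Q z);
  amb_repl : forall (R : V -> V -> Prop) a,
      (forall x y y', mem x a -> R x y -> R x y' -> y = y') ->
      exists b, isSet b /\ forall y, mem y b <-> exists x, mem x a /\ R x y;
  amb_inf : exists I, isSet I /\ (exists e, isSet e /\ (forall z, ~ mem z e) /\ mem e I) /\
      forall x, mem x I -> exists s, mem s I /\ isSet s /\
        forall z, mem z s <-> (mem z x \/ z = x)
}.

Inductive form : Type :=
| Fmem : nat -> nat -> form
| Feq : nat -> nat -> form
| Fatom : nat -> form
| Fbot : form
| Fimp : form -> form -> form
| Fall : nat -> form -> form.

Definition upd (e : nat -> V) (i : nat) (x : V) : nat -> V :=
  fun n => if Nat.eqb n i then x else e n.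

Fixpoint sat (M : V -> Prop) (e : nat -> V) (phi : form) : Prop :=
  match phi with
  | Fmem i j => mem (e i) (e j)
  | Feq i j => e i = e j
  | Fatom i => atom (e i)
  | Fbot => False
  | Fimp a b => sat M e a -> sat M e b
  | Fall i a => forall x, M x -> sat M (upd e i x) a
  end.

Record ModelZFUR (M : V -> Prop) : Prop := {
  m_ext : forall x y, M x -> M y -> isSet x -> isSet y ->
      (forall z, M z -> (mem z x <-> mem z y)) -> x = y;
  m_atom_empty : forall a, M a -> atom a -> forall z, M z -> ~ mem z a;
  m_found : forall x, M x -> (exists z, M z /\ mem z x) ->
      exists y, M y /\ mem y x /\ forall z, M z -> mem z y -> ~ mem z x;
  m_pair : forall x y, M x -> M y -> exists z, M z /\ isSet z /\ mem x z /\ mem y z;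
  m_union : forall x, M x -> exists u, M u /\ isSet u /\
      forall y z, M y -> M z -> mem z y -> mem y x -> mem z u;
  m_power : forall x, M x -> exists p, M p /\ isSet p /\
      forall y, M y -> isSet y -> (forall z, M z -> mem z y -> mem z x) -> mem y p;
  m_inf : exists I, M I /\ isSet I /\
      (exists e, M e /\ isSet e /\ (forall z, M z -> ~ mem z e) /\ mem e I) /\
      forall x, M x -> mem x I -> exists s, M s /\ mem s I /\ isSet s /\
        forall z, M z -> (mem z s <-> (mem z x \/ z = x));
  m_sep : forall (phi : form) (i : nat) (e : nat -> V), (forall n, M (e n)) ->
      forall a, M a -> isSet a -> exists b, M b /\ isSet b /\
        forall x, M x -> (mem x b <-> (mem x a /\ sat M (upd e i x) phi));
  m_repl : forall (phi : form) (i j : nat) (e : nat -> V), (forall n, M (e n)) ->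
      forall a, M a ->
      (forall x, M x -> mem x a -> exists y, M y /\ sat M (upd (upd e i x) j y) phi /\
          forall y', M y' -> sat M (upd (upd e i x) j y') phi -> y' = y) ->
      exists b, M b /\ isSet b /\
        forall y, M y -> (mem y b <-> exists x, M x /\ mem x a /\ sat M (upd (upd e i x) j y) phi)
}.

Definition CTM (M : V -> Prop) : Prop :=
  (exists m, isSet m /\ forall x, M x <-> mem x m) /\
  (forall x y, M x -> mem y x -> M y) /\
  (exists enum : nat -> V, forall x, M x -> exists n, enum n = x) /\
  ModelZFUR M.

Definition IsPair (c x y : V) : Prop :=
  isSet c /\ forall z, mem z c <->
    ((isSet z /\ forall w, mem w z <-> w = x) \/
     (isSet z /\ forall w, mem w z <-> (w = x \/ w = y))).

Definition le (Le p q : V) : Prop := exists c, mem c Le /\ IsPair c p q.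

Definition ForcingPoset (M : V -> Prop) (P Le : V) : Prop :=
  M P /\ M Le /\ isSet P /\ isSet Le /\
  (forall c, mem c Le -> exists p q, IsPair c p q /\ mem p P /\ mem q P) /\
  (forall p, mem p P -> le Le p p) /\
  (forall p q r, mem p P -> mem q P -> mem r P -> le Le p q -> le Le q r -> le Le p r) /\
  (forall p q, mem p P -> mem q P -> le Le p q -> le Le q p -> p = q).

Definition compatible (P Le p q : V) : Prop :=
  exists r, mem r P /\ le Le r p /\ le Le r q.

Inductive IsName (P Le : V) (x : V) : Prop :=
| IsName_intro :
    isSet x ->
    (forall c, mem c x -> exists y p, IsPair c y p /\ mem p P /\ (atom y \/ IsName P Le y)) ->
    (forall c d a p y q, mem c x -> mem d x -> IsPair c a p -> IsPair d y q ->
        atom a -> a <> y -> ~ compatible P Le p q) ->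
    IsName P Le x.

Definition Generic (M : V -> Prop) (P Le : V) (G : V -> Prop) : Prop :=
  (forall p, G p -> mem p P) /\
  (exists p, G p) /\
  (forall p q, G p -> mem q P -> le Le p q -> G q) /\
  (forall p q, G p -> G q -> exists r, G r /\ le Le r p /\ le Le r q) /\
  (forall D, M D -> (forall d, mem d D -> mem d P) ->
     (forall p, mem p P -> exists d, mem d D /\ le Le d p) ->
     exists d, mem d D /\ G d).

(* ---------- Interpretation of names: x_G = a.
   One recursion step for a candidate (partial) interpretation H. *)
Definition ValStep (P Le : V) (G : V -> Prop) (H : V -> V -> Prop) (x b : V) : Prop :=
  (exists c u p, mem c x /\ IsPair c u p /\ atom u /\ G p /\ b = u) \/
  (~ (exists c u p, mem c x /\ IsPair c u p /\ atom u /\ G p) /\ isSet b /\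
   forall z, mem z b <-> exists c y p, mem c x /\ IsPair c y p /\ IsName P Le y /\ G p /\ H y z).

(* H is a correct interpretation on its (downward closed) domain *)
Definition ValFun (P Le : V) (G : V -> Prop) (H : V -> V -> Prop) : Prop :=
  (forall x b b', H x b -> H x b' -> b = b') /\
  (forall x b, H x b -> ValStep P Le G H x b) /\
  (forall x b, H x b -> forall c y p, mem c x -> IsPair c y p -> IsName P Le y ->
       exists z, H y z).

Definition Val (P Le : V) (G : V -> Prop) (x a : V) : Prop :=
  exists H, ValFun P Le G H /\ H x a.

(* p ||- v = w : for every M-generic G with p in G, M[G] |= v_G = w_G,
   i.e. (equality being absolute for the transitive M[G]) v_G = w_G. *)
Definition ForcesEq (M : V -> Prop) (P Le p v w : V) : Prop :=
  forall G, Generic M P Le G -> G p ->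
    exists a, Val P Le G v a /\ Val P Le G w a.

End ZFU.

From Stdlib Require Import Classical Setoid Relations Wellfounded Lia PeanoNat.

(** Mix the names f(p) along the antichain dom f:
    v = {(y, r) | p ∈ dom f, (y, s) ∈ f(p), r ∈ P, r ≤ p, r ≤ s}.
    Because dom f is an antichain and each f(p) is a name, two pairs of v with an
    urelement and a different first component carry incompatible conditions, so v
    is a name.  If G is generic and p ∈ G, then G meets no other element of dom f,
    so the first components of pairs of v with condition in G are exactly those of
    f(p) (use upward closure one way and directedness of G the other); names with
    the same G-realized first components have the same interpretation.  Finally v
    is defined in M by Separation from Pow(Pow(B)), where B ⊇ P is built from f by
    Union. *)

Section ZFU.

Context {V : Type} (mem : V -> V -> Prop) (atom : V -> Prop).
Hypothesis HV : Ambient mem atom.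

(** * Kuratowski pairs *)

Definition IsSingleton (z x : V) : Prop := isSet atom z /\ forall w, mem w z <-> w = x.
Definition IsUpair (z x y : V) : Prop := isSet atom z /\ forall w, mem w z <-> (w = x \/ w = y).
Definition opair_mem (x a b : V) : Prop := exists c, mem c x /\ IsPair mem atom c a b.

Lemma upair_exists x y : exists z, IsUpair z x y.
Proof. exact (amb_pair _ _ HV x y). Qed.

Lemma singleton_exists x : exists z, IsSingleton z x.
Proof.
  destruct (upair_exists x x) as [z [Hz Hmem]].
  exists z; split; [exact Hz|]. intro w; rewrite Hmem; tauto.
Qed.

Lemma upair_unique z z' x y : IsUpair z x y -> IsUpair z' x y -> z = z'.
Proof.
  intros [Hz Hmem] [Hz' Hmem']. apply (amb_ext _ _ HV); auto.
  intro w; rewrite Hmem, Hmem'; tauto.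
Qed.

Lemma singleton_unique z z' x : IsSingleton z x -> IsSingleton z' x -> z = z'.
Proof.
  intros [Hz Hmem] [Hz' Hmem']. apply (amb_ext _ _ HV); auto.
  intro w; rewrite Hmem, Hmem'; tauto.
Qed.

Lemma pair_of_upairs c s t x y :
  IsSingleton s x -> IsUpair t x y -> IsUpair c s t -> IsPair mem atom c x y.
Proof.
  intros Hs Ht [Hc Hmem]. split; [exact Hc|]. intro z; rewrite Hmem. split.
  - intros [-> | ->]; [left; exact Hs | right; exact Ht].
  - intros [Hz | Hz]; [left; exact (singleton_unique _ _ _ Hz Hs)
                      | right; exact (upair_unique _ _ _ _ Hz Ht)].
Qed.

Lemma pair_exists x y : exists c, IsPair mem atom c x y.
Proof.
  destruct (singleton_exists x) as [s Hs]. destruct (upair_exists x y) as [t Ht].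
  destruct (upair_exists s t) as [c Hc]. exists c. exact (pair_of_upairs _ _ _ _ _ Hs Ht Hc).
Qed.

Lemma pair_unique c c' x y : IsPair mem atom c x y -> IsPair mem atom c' x y -> c = c'.
Proof.
  intros [Hc Hmem] [Hc' Hmem']. apply (amb_ext _ _ HV); auto.
  intro z; rewrite Hmem, Hmem'; tauto.
Qed.

Lemma pair_member_has_fst c x y t : IsPair mem atom c x y -> mem t c -> mem x t.
Proof. intros [_ Hmem] Ht. apply Hmem in Ht as [[_ Hx] | [_ Hx]]; apply Hx; auto. Qed.

Lemma pair_union c x y :
  IsPair mem atom c x y -> forall z, (exists t, mem t c /\ mem z t) <-> z = x \/ z = y.
Proof.
  intros [Hc Hmem] z. split.
  - intros (t & Ht & Hz). apply Hmem in Ht as [[_ Ht] | [_ Ht]]; apply Ht in Hz; tauto.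
  - intros [-> | ->].
    + destruct (singleton_exists x) as [s Hs].
      exists s; split; [apply Hmem; left; exact Hs | apply Hs; reflexivity].
    + destruct (upair_exists x y) as [t Ht].
      exists t; split; [apply Hmem; right; exact Ht | apply Ht; right; reflexivity].
Qed.

Lemma pair_inj c x y x' y' :
  IsPair mem atom c x y -> IsPair mem atom c x' y' -> x = x' /\ y = y'.
Proof.
  intros Hp Hp'.
  assert (Hx : x' = x).
  { destruct (singleton_exists x) as [s Hs].
    apply Hs. apply (pair_member_has_fst _ _ _ _ Hp'). apply Hp. left; exact Hs. }
  subst x'. split; [reflexivity|].
  assert (Hy : y = x \/ y = y') by (apply (pair_union _ _ _ Hp'), (pair_union _ _ _ Hp); auto).
  assert (Hy' : y' = x \/ y' = y) by (apply (pair_union _ _ _ Hp), (pair_union _ _ _ Hp'); auto).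
  destruct Hy, Hy'; congruence.
Qed.

Lemma mem_lt_wf : well_founded (clos_trans V mem).
Proof. exact (wf_clos_trans _ _ (amb_wf _ _ HV)). Qed.

Lemma mem_lt_irrefl x : ~ clos_trans V mem x x.
Proof.
  induction x as [x IH] using (well_founded_induction mem_lt_wf).
  intro Hxx. exact (IH x Hxx Hxx).
Qed.

Lemma opair_mem_fst_lt x a b : opair_mem x a b -> clos_trans V mem a x.
Proof.
  intros (c & Hc & Hp). destruct (proj2 (pair_union _ _ _ Hp a) (or_introl eq_refl)) as (t & Ht & Ha).
  apply t_trans with t; [apply t_step; exact Ha|].
  apply t_trans with c; apply t_step; assumption.
Qed.

(** * Interpretation of names *)

Section Interpretation.

Variables (P Le : V) (G : V -> Prop).
Hypothesis HGcompat : forall p q, G p -> G q -> compatible mem atom P Le p q.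

Definition realized (x y : V) : Prop := exists p, opair_mem x y p /\ G p.

Definition NameVal (y z : V) : Prop := IsName mem atom P Le y /\ Val mem atom P Le G y z.

Lemma realized_intro x c y p : mem c x -> IsPair mem atom c y p -> G p -> realized x y.
Proof. intros Hc Hcp Gp. exists p. split; [exists c; auto | exact Gp]. Qed.

Lemma ValStep_iff H x b :
  ValStep mem atom P Le G H x b <->
  (exists u, atom u /\ realized x u /\ b = u) \/
  (~ (exists u, atom u /\ realized x u) /\ isSet atom b /\
   forall z, mem z b <-> exists y, realized x y /\ IsName mem atom P Le y /\ H y z).
Proof.
  assert (Hatoms : (exists c u p, mem c x /\ IsPair mem atom c u p /\ atom u /\ G p) <->
                   (exists u, atom u /\ realized x u)).
  { split.
    - intros (c & u & p & Hc & Hcp & Hu & Gp). exists u. eauto using realized_intro.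
    - intros (u & Hu & p & (c & Hc & Hcp) & Gp). exists c, u, p. auto. }
  assert (Hmembers : forall z, (exists c y p, mem c x /\ IsPair mem atom c y p /\
                                  IsName mem atom P Le y /\ G p /\ H y z) <->
                     (exists y, realized x y /\ IsName mem atom P Le y /\ H y z)).
  { intro z. split.
    - intros (c & y & p & Hc & Hcp & Hy & Gp & Hz). exists y. eauto using realized_intro.
    - intros (y & (p & (c & Hc & Hcp) & Gp) & Hy & Hz). exists c, y, p. auto. }
  unfold ValStep. rewrite <- Hatoms. setoid_rewrite Hmembers. split.
  - intros [(c & u & p & Hc & Hcp & Hu & Gp & ->) | Hset]; [left | right; exact Hset].
    exists u. eauto using realized_intro.
  - intros [(u & Hu & (p & (c & Hc & Hcp) & Gp) & ->) | Hset]; [left | right; exact Hset].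
    exists c, u, p. auto.
Qed.

Lemma ValStep_ext H H' x b :
  (forall y z, realized x y -> IsName mem atom P Le y -> (H y z <-> H' y z)) ->
  ValStep mem atom P Le G H x b -> ValStep mem atom P Le G H' x b.
Proof.
  intros Hagree. rewrite !ValStep_iff.
  intros [Hatom | (Hnatom & Hb & Hmem)]; [left; exact Hatom | right].
  split; [exact Hnatom|]. split; [exact Hb|]. intro z; rewrite Hmem.
  split; intros (y & Hy & Hname & Hz); exists y;
    (split; [exact Hy | split; [exact Hname | apply (Hagree y z Hy Hname); exact Hz]]).
Qed.

Lemma realized_atom_unique x u y :
  IsName mem atom P Le x -> atom u -> realized x u -> realized x y -> y = u.
Proof.
  intros [_ _ Hanti] Hu (p & (c & Hc & Hcp) & Gp) (q & (d & Hd & Hdq) & Gq).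
  apply NNPP; intro Hne.
  exact (Hanti c d u p y q Hc Hd Hcp Hdq Hu (not_eq_sym Hne) (HGcompat p q Gp Gq)).
Qed.

Lemma realized_lt x y : realized x y -> clos_trans V mem y x.
Proof. intros (p & Hp & _). exact (opair_mem_fst_lt _ _ _ Hp). Qed.

Lemma ValFun_child_defined H x b y p :
  ValFun mem atom P Le G H -> H x b -> opair_mem x y p -> IsName mem atom P Le y ->
  exists z, H y z.
Proof. intros (_ & _ & Htot) Hxb (c & Hc & Hcp). exact (Htot x b Hxb c y p Hc Hcp). Qed.

Lemma ValFun_unique H H' x b b' :
  ValFun mem atom P Le G H -> ValFun mem atom P Le G H' -> IsName mem atom P Le x ->
  H x b -> H' x b' -> b = b'.
Proof.
  revert H H' b b'.
  induction x as [x IH] using (well_founded_induction mem_lt_wf).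
  intros H H' b b' HF HF' Hx Hxb Hxb'.
  assert (Hsub : forall H1 H2 b2, ValFun mem atom P Le G H1 -> ValFun mem atom P Le G H2 ->
            H2 x b2 -> forall y z, realized x y -> IsName mem atom P Le y ->
            H1 y z -> H2 y z).
  { intros H1 H2 b2 HF1 HF2 Hxb2 y z Hy Hname Hz.
    pose proof Hy as (p & Hp & _).
    destruct (ValFun_child_defined H2 x b2 y p HF2 Hxb2 Hp Hname) as [z' Hz'].
    rewrite (IH y (realized_lt x y Hy) H1 H2 z z' HF1 HF2 Hname Hz Hz'). exact Hz'. }
  pose proof (proj1 (proj2 HF) x b Hxb) as Hstep.
  pose proof (proj1 (proj2 HF') x b' Hxb') as Hstep'.
  rewrite ValStep_iff in Hstep, Hstep'.
  destruct Hstep as [(u & Hu & Hxu & ->) | (Hnatom & Hb & Hmem)];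
  destruct Hstep' as [(u' & Hu' & Hxu' & ->) | (Hnatom' & Hb' & Hmem')].
  - symmetry. exact (realized_atom_unique x u u' Hx Hu Hxu Hxu').
  - exfalso. apply Hnatom'. exists u; auto.
  - exfalso. apply Hnatom. exists u'; auto.
  - apply (amb_ext _ _ HV); auto. intro z. rewrite Hmem, Hmem'.
    split; intros (y & Hy & Hname & Hz); exists y; (split; [exact Hy | split; [exact Hname|]]).
    + exact (Hsub H H' b' HF HF' Hxb' y z Hy Hname Hz).
    + exact (Hsub H' H b HF' HF Hxb y z Hy Hname Hz).
Qed.

Lemma val_unique x a b :
  IsName mem atom P Le x -> Val mem atom P Le G x a -> Val mem atom P Le G x b -> a = b.
Proof. intros Hx (H & HF & Ha) (H' & HF' & Hb). exact (ValFun_unique H H' x a b HF HF' Hx Ha Hb). Qed.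

Lemma NameVal_ValFun : ValFun mem atom P Le G NameVal.
Proof.
  split; [| split].
  - intros x b b' [Hx Hb] [_ Hb']. exact (val_unique x b b' Hx Hb Hb').
  - intros x b [_ (H & HF & Hxb)]. apply (ValStep_ext H); [| exact (proj1 (proj2 HF) x b Hxb)].
    intros y z (p & Hp & _) Hname.
    destruct (ValFun_child_defined H x b y p HF Hxb Hp Hname) as [z' Hz'].
    split.
    + intro Hz. split; [exact Hname | exists H; auto].
    + intros [_ Hval]. rewrite (val_unique y z z' Hname Hval (ex_intro _ H (conj HF Hz'))).
      exact Hz'.
  - intros x b [_ (H & HF & Hxb)] c y p Hc Hcp Hname.
    destruct (proj2 (proj2 HF) x b Hxb c y p Hc Hcp Hname) as [z Hz].
    exists z. split; [exact Hname | exists H; auto].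
Qed.

Lemma val_step x a :
  IsName mem atom P Le x -> Val mem atom P Le G x a -> ValStep mem atom P Le G NameVal x a.
Proof. intros Hx Ha. exact (proj1 (proj2 NameVal_ValFun) x a (conj Hx Ha)). Qed.

Lemma ValStep_NameVal_exists x : exists b, ValStep mem atom P Le G NameVal x b.
Proof.
  destruct (classic (exists u, atom u /\ realized x u)) as [(u & Hu & Hxu) | Hnatom].
  - exists u. apply ValStep_iff. left. exists u; auto.
  - set (R := fun c z => exists y p, IsPair mem atom c y p /\ G p /\ NameVal y z).
    destruct (amb_repl _ _ HV R x) as (b & Hb & Hmem).
    { intros c z z' _ (y & p & Hcp & _ & [Hname Hz]) (y' & p' & Hcp' & _ & [_ Hz']).
      destruct (pair_inj _ _ _ _ _ Hcp Hcp') as [<- _].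
      exact (val_unique y z z' Hname Hz Hz'). }
    exists b. apply ValStep_iff. right. split; [exact Hnatom|]. split; [exact Hb|].
    intro z. rewrite Hmem. split.
    + intros (c & Hc & y & p & Hcp & Gp & Hname & Hz).
      exists y. split; [exact (realized_intro x c y p Hc Hcp Gp)|]. split; [exact Hname|].
      split; assumption.
    + intros (y & (p & (c & Hc & Hcp) & Gp) & _ & Hz). exists c. split; [exact Hc|].
      exists y, p. auto.
Qed.

Lemma val_extend x b :
  ValStep mem atom P Le G NameVal x b ->
  (forall y p, opair_mem x y p -> IsName mem atom P Le y -> exists z, Val mem atom P Le G y z) ->
  Val mem atom P Le G x b.
Proof.
  intros Hstep Hchildren.
  (* Restricting [NameVal] to names below x keeps x out of its domain. *)
  set (H := fun y z => (NameVal y z /\ clos_trans V mem y x) \/ (y = x /\ z = b)).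
  assert (Hbelow : forall y z, clos_trans V mem y x -> (NameVal y z <-> H y z)).
  { intros y z Hyx. split.
    - intro Hz. left; auto.
    - intros [[Hz _] | [-> _]]; [exact Hz | exfalso; exact (mem_lt_irrefl x Hyx)]. }
  assert (Hagree : forall y, y = x \/ clos_trans V mem y x -> forall y' z', realized y y' ->
            IsName mem atom P Le y' -> (NameVal y' z' <-> H y' z')).
  { intros y Hy y' z' Hy' _. apply Hbelow.
    destruct Hy as [Hyx | Hyx]; [subst y; exact (realized_lt _ _ Hy')|].
    exact (t_trans _ _ _ _ _ (realized_lt _ _ Hy') Hyx). }
  exists H. split; [| right; auto].
  split; [| split].
  - intros y z z' [[Hz Hyx] | [Ey Ez]] [[Hz' Hyx'] | [Ey' Ez']]; subst.
    + exact (proj1 NameVal_ValFun y z z' Hz Hz').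
    + exfalso. exact (mem_lt_irrefl _ Hyx).
    + exfalso. exact (mem_lt_irrefl _ Hyx').
    + reflexivity.
  - intros y z [[Hz Hyx] | [-> ->]].
    + exact (ValStep_ext NameVal H y z (Hagree y (or_intror Hyx))
               (proj1 (proj2 NameVal_ValFun) y z Hz)).
    + exact (ValStep_ext NameVal H x b (Hagree x (or_introl eq_refl)) Hstep).
  - intros y z Hyz c y' p Hc Hcp Hname.
    assert (Hy'x : clos_trans V mem y' x).
    { pose proof (opair_mem_fst_lt _ _ _ (ex_intro _ c (conj Hc Hcp))) as Hy'y.
      destruct Hyz as [[_ Hyx] | [-> _]]; [exact (t_trans _ _ _ _ _ Hy'y Hyx) | exact Hy'y]. }
    assert (Hval : exists z', NameVal y' z').
    { destruct Hyz as [[Hz _] | [-> _]].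
      - exact (proj2 (proj2 NameVal_ValFun) y z Hz c y' p Hc Hcp Hname).
      - destruct (Hchildren y' p (ex_intro _ c (conj Hc Hcp)) Hname) as [z' Hz'].
        exists z'. split; assumption. }
    destruct Hval as [z' Hz']. exists z'. apply Hbelow; assumption.
Qed.

Lemma val_exists x : IsName mem atom P Le x -> exists a, Val mem atom P Le G x a.
Proof.
  induction x as [x IH] using (well_founded_induction mem_lt_wf). intro Hx.
  destruct (ValStep_NameVal_exists x) as [b Hb]. exists b. apply (val_extend x b Hb).
  intros y p Hp Hy. exact (IH y (opair_mem_fst_lt _ _ _ Hp) Hy).
Qed.

Lemma val_eq_of_realized x x' a a' :
  IsName mem atom P Le x -> IsName mem atom P Le x' ->
  (forall y, realized x y <-> realized x' y) ->
  Val mem atom P Le G x a -> Val mem atom P Le G x' a' -> a = a'.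
Proof.
  intros Hx Hx' Hsame Ha Ha'.
  pose proof (val_step x a Hx Ha) as Hstep. pose proof (val_step x' a' Hx' Ha') as Hstep'.
  rewrite ValStep_iff in Hstep, Hstep'.
  destruct Hstep as [(u & Hu & Hxu & ->) | (Hnatom & Hb & Hmem)];
  destruct Hstep' as [(u' & Hu' & Hxu' & ->) | (Hnatom' & Hb' & Hmem')].
  - exact (realized_atom_unique x' u' u Hx' Hu' Hxu' (proj1 (Hsame u) Hxu)).
  - exfalso. apply Hnatom'. exists u. split; [exact Hu | apply Hsame; exact Hxu].
  - exfalso. apply Hnatom. exists u'. split; [exact Hu' | apply Hsame; exact Hxu'].
  - apply (amb_ext _ _ HV); auto. intro z. rewrite Hmem, Hmem'.
    split; intros (y & Hy & Hname & Hz); exists y;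
      (split; [apply Hsame; exact Hy | split; assumption]).
Qed.

End Interpretation.

(** * Mixing names along an antichain *)

Section Mixing.

Variables (M : V -> Prop) (P Le f : V).
Hypothesis HP : ForcingPoset mem atom M P Le.
Hypothesis Hffun : forall p w w', opair_mem f p w -> opair_mem f p w' -> w = w'.
Hypothesis Hfanti : forall p w q w', opair_mem f p w -> opair_mem f q w' -> p <> q ->
  ~ compatible mem atom P Le p q.
Hypothesis Hfname : forall p w, opair_mem f p w -> IsName mem atom P Le w.

Lemma le_in_P r p : le mem atom Le r p -> mem r P /\ mem p P.
Proof.
  destruct HP as (_ & _ & _ & _ & HLe & _). intros (c & Hc & Hcp).
  destruct (HLe c Hc) as (r' & p' & Hcp' & Hr' & Hp').
  destruct (pair_inj _ _ _ _ _ Hcp Hcp') as [-> ->]. split; assumption.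
Qed.

Lemma le_trans_P r s t : le mem atom Le r s -> le mem atom Le s t -> le mem atom Le r t.
Proof.
  destruct HP as (_ & _ & _ & _ & _ & _ & Htrans & _). intros Hrs Hst.
  destruct (le_in_P r s Hrs), (le_in_P s t Hst). exact (Htrans r s t ltac:(auto) ltac:(auto) ltac:(auto) Hrs Hst).
Qed.

Lemma compatible_weaken r q p p' :
  le mem atom Le r p -> le mem atom Le q p' -> compatible mem atom P Le r q ->
  compatible mem atom P Le p p'.
Proof.
  intros Hrp Hqp' (t & Ht & Htr & Htq).
  exists t. split; [exact Ht|]. split; [exact (le_trans_P t r p Htr Hrp) | exact (le_trans_P t q p' Htq Hqp')].
Qed.

Definition mix_entry (y r : V) : Prop :=
  exists p w s, opair_mem f p w /\ opair_mem w y s /\ mem r P /\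
    le mem atom Le r p /\ le mem atom Le r s.

Definition IsMixture (v : V) : Prop :=
  isSet atom v /\ forall c, mem c v <-> exists y r, IsPair mem atom c y r /\ mix_entry y r.

Lemma mixture_opair_mem v y r : IsMixture v -> opair_mem v y r <-> mix_entry y r.
Proof.
  intros [_ Hv]. split.
  - intros (c & Hc & Hcp). apply Hv in Hc as (y' & r' & Hcp' & Hentry).
    destruct (pair_inj _ _ _ _ _ Hcp Hcp') as [-> ->]. exact Hentry.
  - intro Hentry. destruct (pair_exists y r) as [c Hcp].
    exists c. split; [apply Hv; exists y, r; auto | exact Hcp].
Qed.

Lemma name_opair_mem w y s :
  IsName mem atom P Le w -> opair_mem w y s -> atom y \/ IsName mem atom P Le y.
Proof.
  intros [_ Hmem _] (e & He & Hep). destruct (Hmem e He) as (y' & s' & Hep' & _ & Hy').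
  destruct (pair_inj _ _ _ _ _ Hep Hep') as [-> _]. exact Hy'.
Qed.

Lemma mixture_name v : IsMixture v -> IsName mem atom P Le v.
Proof.
  intro Hv. constructor; [exact (proj1 Hv) | |].
  - intros c Hc. pose proof Hc as Hc'. apply (proj2 Hv) in Hc' as (y & r & Hcp & Hentry).
    exists y, r. split; [exact Hcp|].
    destruct Hentry as (p & w & s & Hpw & Hys & Hr & _). split; [exact Hr|].
    exact (name_opair_mem w y s (Hfname p w Hpw) Hys).
  - intros c d a r y q Hc Hd Hca Hdy Ha Hne Hcompat.
    destruct (proj1 (mixture_opair_mem v a r Hv) (ex_intro _ c (conj Hc Hca)))
      as (p & w & s & Hpw & (e & He & Hea) & _ & Hrp & Hrs).
    destruct (proj1 (mixture_opair_mem v y q Hv) (ex_intro _ d (conj Hd Hdy)))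
      as (p' & w' & s' & Hpw' & (e' & He' & Hey) & _ & Hqp' & Hqs').
    destruct (classic (p = p')) as [<- | Hpp'].
    + rewrite <- (Hffun p w w' Hpw Hpw') in He'.
      destruct (Hfname p w Hpw) as [_ _ Hanti].
      exact (Hanti e e' a s y s' He He' Hea Hey Ha Hne (compatible_weaken r q s s' Hrs Hqs' Hcompat)).
    + exact (Hfanti p w p' w' Hpw Hpw' Hpp' (compatible_weaken r q p p' Hrp Hqp' Hcompat)).
Qed.

Lemma generic_compatible G :
  Generic mem atom M P Le G -> forall p q, G p -> G q -> compatible mem atom P Le p q.
Proof.
  intros (HGP & _ & _ & HGdir & _) p q Gp Gq. destruct (HGdir p q Gp Gq) as (r & Gr & Hrp & Hrq).
  exists r. auto.
Qed.

Lemma mixture_realized G v p w :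
  Generic mem atom M P Le G -> IsMixture v -> G p -> opair_mem f p w ->
  forall y, realized G v y <-> realized G w y.
Proof.
  intros HG Hv Gp Hpw y. pose proof HG as (HGP & _ & HGup & HGdir & _). split.
  - intros (r & Hyr & Gr).
    destruct (proj1 (mixture_opair_mem v y r Hv) Hyr) as (p' & w' & s & Hpw' & Hys & _ & Hrp' & Hrs).
    assert (Gp' : G p') by exact (HGup r p' Gr (proj2 (le_in_P r p' Hrp')) Hrp').
    assert (Ep : p' = p).
    { apply NNPP; intro Hne. exact (Hfanti p' w' p w Hpw' Hpw Hne (generic_compatible G HG p' p Gp' Gp)). }
    subst p'. rewrite (Hffun p w' w Hpw' Hpw) in Hys.
    exists s. split; [exact Hys | exact (HGup r s Gr (proj2 (le_in_P r s Hrs)) Hrs)].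
  - intros (s & Hys & Gs). destruct (HGdir p s Gp Gs) as (r & Gr & Hrp & Hrs).
    exists r. split; [| exact Gr]. apply (mixture_opair_mem v y r Hv).
    exists p, w, s. auto.
Qed.

Lemma mixture_forces v p w :
  IsMixture v -> opair_mem f p w -> ForcesEq mem atom M P Le p v w.
Proof.
  intros Hv Hpw G HG Gp.
  pose proof (generic_compatible G HG) as HGcompat.
  destruct (val_exists P Le G HGcompat v (mixture_name v Hv)) as [a Ha].
  destruct (val_exists P Le G HGcompat w (Hfname p w Hpw)) as [a' Ha'].
  rewrite (val_eq_of_realized P Le G HGcompat v w a a' (mixture_name v Hv) (Hfname p w Hpw)
             (mixture_realized G v p w HG Hv Gp Hpw) Ha Ha') in Ha.
  exists a'. split; assumption.
Qed.

End Mixing.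

(** * Defining the mixture in M *)

Definition Fnot (a : form) : form := Fimp a Fbot.
Definition Fand (a b : form) : form := Fnot (Fimp a (Fnot b)).
Definition For (a b : form) : form := Fimp (Fnot a) b.
Definition Fiff (a b : form) : form := Fand (Fimp a b) (Fimp b a).
Definition Fex (i : nat) (a : form) : form := Fnot (Fall i (Fnot a)).

(* [Fpair] binds the variables 200 and 201, [FpairIn] binds 100 and [Fmix] binds
   4 to 8, so the free variables of each use are kept below these. *)
Definition Fpair (i j k : nat) : form :=
  Fand (Fnot (Fatom i)) (Fall 200 (Fiff (Fmem 200 i)
    (For (Fand (Fnot (Fatom 200)) (Fall 201 (Fiff (Fmem 201 200) (Feq 201 j))))
         (Fand (Fnot (Fatom 200)) (Fall 201 (Fiff (Fmem 201 200) (For (Feq 201 j) (Feq 201 k)))))))).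

Definition FpairIn (x i j : nat) : form := Fex 100 (Fand (Fmem 100 x) (Fpair 100 i j)).

(* With c, f, P, Le in variables 0 to 3 and p, w, y, s, r in 4 to 8:
   c = (y, r), (p, w) ∈ f, (y, s) ∈ w, r ∈ P, (r, p) ∈ Le and (r, s) ∈ Le. *)
Definition Fmix : form :=
  Fex 4 (Fex 5 (Fex 6 (Fex 7 (Fex 8
    (Fand (Fpair 0 6 8) (Fand (FpairIn 1 4 5) (Fand (FpairIn 5 6 7)
      (Fand (Fmem 8 2) (Fand (FpairIn 3 8 4) (FpairIn 3 8 7)))))))))).

Section Relativization.

Variable M : V -> Prop.

Lemma sat_and e a b :
  sat mem atom M e (Fand a b) <-> sat mem atom M e a /\ sat mem atom M e b.
Proof. simpl. split; [intro H; apply NNPP; tauto | tauto]. Qed.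

Lemma sat_or e a b :
  sat mem atom M e (For a b) <-> sat mem atom M e a \/ sat mem atom M e b.
Proof. simpl. split; [intro H; apply NNPP; tauto | tauto]. Qed.

Lemma sat_iff e a b :
  sat mem atom M e (Fiff a b) <-> (sat mem atom M e a <-> sat mem atom M e b).
Proof. unfold Fiff. rewrite sat_and. simpl. tauto. Qed.

Lemma sat_ex e i a :
  sat mem atom M e (Fex i a) <-> exists x, M x /\ sat mem atom M (upd e i x) a.
Proof.
  simpl. split.
  - intro H. apply NNPP. intro Hno. apply H. intros x Hx Hsat. apply Hno. eauto.
  - intros (x & Hx & Hsat) H. exact (H x Hx Hsat).
Qed.

Lemma upd_eq (e : nat -> V) i x : upd e i x i = x.
Proof. unfold upd. rewrite Nat.eqb_refl. reflexivity. Qed.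

Lemma upd_neq (e : nat -> V) i x j : j <> i -> upd e i x j = e j.
Proof. intro Hji. unfold upd. apply Nat.eqb_neq in Hji. rewrite Hji. reflexivity. Qed.

Definition RelIsPair (c x y : V) : Prop :=
  isSet atom c /\ forall z, M z -> (mem z c <->
    ((isSet atom z /\ forall w, M w -> (mem w z <-> w = x)) \/
     (isSet atom z /\ forall w, M w -> (mem w z <-> (w = x \/ w = y))))).

Lemma sat_Fpair_rel e i j k : i < 200 -> j < 200 -> k < 200 ->
  (sat mem atom M e (Fpair i j k) <-> RelIsPair (e i) (e j) (e k)).
Proof.
  intros Hi Hj Hk. unfold Fpair, RelIsPair, isSet.
  repeat (cbn [sat]; first [ setoid_rewrite sat_iff | setoid_rewrite sat_and
                            | setoid_rewrite sat_or ]).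
  cbn [sat]. unfold upd. simpl.
  assert (Ei : Nat.eqb i 200 = false /\ Nat.eqb i 201 = false) by (split; apply Nat.eqb_neq; lia).
  assert (Ej : Nat.eqb j 200 = false /\ Nat.eqb j 201 = false) by (split; apply Nat.eqb_neq; lia).
  assert (Ek : Nat.eqb k 200 = false /\ Nat.eqb k 201 = false) by (split; apply Nat.eqb_neq; lia).
  rewrite (proj1 Ei), (proj2 Ej), (proj2 Ek), (proj1 Ej), (proj1 Ek). reflexivity.
Qed.


Hypothesis HT : forall x y, M x -> mem y x -> M y.
Hypothesis HZ : ModelZFUR mem atom M.

Lemma upd_in_M e i x : (forall n, M (e n)) -> M x -> forall n, M (upd e i x n).
Proof. intros He Hx n. unfold upd. destruct (Nat.eqb n i); auto. Qed.

Lemma M_upair x y : M x -> M y -> exists z, M z /\ IsUpair z x y.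
Proof.
  intros Hx Hy. destruct (m_pair _ _ _ HZ x y Hx Hy) as (z & Hz & Hzset & Hxz & Hyz).
  set (e := fun n => match n with 2 => y | _ => x end).
  destruct (m_sep _ _ _ HZ (For (Feq 0 1) (Feq 0 2)) 0 e) with (a := z)
    as (b & Hb & Hbset & Hmem); [intros [| [| [|]]]; assumption | exact Hz | exact Hzset |].
  assert (Hsat : forall w, sat mem atom M (upd e 0 w) (For (Feq 0 1) (Feq 0 2)) <-> w = x \/ w = y).
  { intro w. rewrite sat_or. reflexivity. }
  exists b. split; [exact Hb|]. split; [exact Hbset|]. intro w. split.
  - intro Hw. apply Hsat, (Hmem w (HT b w Hb Hw)), Hw.
  - intro Hw. assert (Mw : M w) by (destruct Hw as [-> | ->]; assumption).
    apply (Hmem w Mw). split; [destruct Hw as [-> | ->]; assumption | apply Hsat; exact Hw].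
Qed.

Lemma upair_in_M z x y : M x -> M y -> IsUpair z x y -> M z.
Proof.
  intros Hx Hy Hz. destruct (M_upair x y Hx Hy) as (z' & Hz' & Hupair).
  rewrite (upair_unique z z' x y Hz Hupair). exact Hz'.
Qed.

Lemma pair_in_M c x y : M x -> M y -> IsPair mem atom c x y -> M c.
Proof.
  intros Hx Hy Hc.
  destruct (M_upair x x Hx Hx) as (s & Ms & Hs). destruct (M_upair x y Hx Hy) as (t & Mt & Ht).
  destruct (M_upair s t Ms Mt) as (c' & Mc' & Hc').
  assert (Hsing : IsSingleton s x) by (split; [apply Hs | intro w; rewrite (proj2 Hs); tauto]).
  rewrite (pair_unique c c' x y Hc (pair_of_upairs c' s t x y Hsing Ht Hc')). exact Mc'.
Qed.

Lemma opair_mem_in_M x a b : M x -> opair_mem x a b -> M a /\ M b.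
Proof.
  intros Hx (c & Hc & Hcp). assert (Mc : M c) by exact (HT x c Hx Hc).
  destruct (proj2 (pair_union c a b Hcp a) (or_introl eq_refl)) as (s & Hs & Ha).
  destruct (proj2 (pair_union c a b Hcp b) (or_intror eq_refl)) as (t & Ht & Hb).
  split; [exact (HT s a (HT c s Mc Hs) Ha) | exact (HT t b (HT c t Mc Ht) Hb)].
Qed.

Lemma RelIsPair_iff c x y : M c -> M x -> M y -> RelIsPair c x y <-> IsPair mem atom c x y.
Proof.
  intros Hc Hx Hy.
  assert (Hsing : forall z, M z -> (forall w, M w -> (mem w z <-> w = x)) <->
                                   (forall w, mem w z <-> w = x)).
  { intros z Hz. split; intros H w; [| intros _; apply H].
    split; [intro Hw; apply (H w (HT z w Hz Hw)), Hw | intros ->; apply H; auto]. }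
  assert (Hupair : forall z, M z -> (forall w, M w -> (mem w z <-> w = x \/ w = y)) <->
                                    (forall w, mem w z <-> w = x \/ w = y)).
  { intros z Hz. split; intros H w; [| intros _; apply H].
    split; [intro Hw; apply (H w (HT z w Hz Hw)), Hw
           | intro Hw; apply H; [destruct Hw as [-> | ->]; assumption | exact Hw]]. }
  unfold RelIsPair, IsPair. split; intros [Hcset Hmem]; split; try exact Hcset.
  - intro z. split.
    + intro Hz. assert (Mz : M z) by exact (HT c z Hc Hz).
      apply (Hmem z Mz) in Hz. rewrite <- (Hsing z Mz), <- (Hupair z Mz). exact Hz.
    + intro Hz. assert (Mz : M z).
      { destruct Hz as [Hz | Hz]; [apply (upair_in_M z x x Hx Hx) | exact (upair_in_M z x y Hx Hy Hz)].
        split; [apply Hz | intro w; rewrite (proj2 Hz); tauto]. }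
      apply (Hmem z Mz). rewrite (Hsing z Mz), (Hupair z Mz). exact Hz.
  - intros z Mz. rewrite Hmem, (Hsing z Mz), (Hupair z Mz). reflexivity.
Qed.

Lemma sat_Fpair e i j k : (forall n, M (e n)) -> i < 200 -> j < 200 -> k < 200 ->
  (sat mem atom M e (Fpair i j k) <-> IsPair mem atom (e i) (e j) (e k)).
Proof. intros He Hi Hj Hk. rewrite sat_Fpair_rel by assumption. apply RelIsPair_iff; apply He. Qed.

Lemma sat_FpairIn e x i j : (forall n, M (e n)) -> x < 100 -> i < 100 -> j < 100 ->
  (sat mem atom M e (FpairIn x i j) <-> opair_mem (e x) (e i) (e j)).
Proof.
  intros He Hx Hi Hj. unfold FpairIn. rewrite sat_ex.
  assert (Hupd : forall c n, n < 100 -> upd e 100 c n = e n) by (intros; apply upd_neq; lia).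
  split.
  - intros (c & Mc & Hsat). rewrite sat_and, sat_Fpair in Hsat by (apply upd_in_M || lia; auto).
    cbn [sat] in Hsat. rewrite upd_eq, !Hupd in Hsat by assumption.
    exists c. exact Hsat.
  - intros (c & Hc & Hcp). assert (Mc : M c) by exact (HT (e x) c (He x) Hc).
    exists c. split; [exact Mc|].
    rewrite sat_and, sat_Fpair by (apply upd_in_M || lia; auto).
    cbn [sat]. rewrite upd_eq, !Hupd by assumption. split; assumption.
Qed.

Lemma sat_Fmix e : (forall n, M (e n)) ->
  (sat mem atom M e Fmix <->
   exists y r, IsPair mem atom (e 0) y r /\ mix_entry (e 2) (e 3) (e 1) y r).
Proof.
  intro He. unfold Fmix. split.
  - intro Hsat.
    apply sat_ex in Hsat as (p & Mp & Hsat). apply sat_ex in Hsat as (w & Mw & Hsat).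
    apply sat_ex in Hsat as (y & My & Hsat). apply sat_ex in Hsat as (s & Ms & Hsat).
    apply sat_ex in Hsat as (r & Mr & Hsat).
    rewrite !sat_and, sat_Fpair, !sat_FpairIn in Hsat by (repeat apply upd_in_M; auto || lia).
    cbn [sat upd Nat.eqb] in Hsat.
    destruct Hsat as (Hc & Hpw & Hys & Hr & Hrp & Hrs).
    exists y, r. split; [exact Hc|]. exists p, w, s. auto.
  - intros (y & r & Hc & p & w & s & Hpw & Hys & Hr & Hrp & Hrs).
    destruct (opair_mem_in_M (e 1) p w (He 1) Hpw) as [Mp Mw].
    destruct (opair_mem_in_M w y s Mw Hys) as [My Ms].
    assert (Mr : M r) by exact (HT (e 2) r (He 2) Hr).
    apply sat_ex. exists p. split; [exact Mp|]. apply sat_ex. exists w. split; [exact Mw|].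
    apply sat_ex. exists y. split; [exact My|]. apply sat_ex. exists s. split; [exact Ms|].
    apply sat_ex. exists r. split; [exact Mr|].
    rewrite !sat_and, sat_Fpair, !sat_FpairIn by (repeat apply upd_in_M; auto || lia).
    cbn [sat upd Nat.eqb]. split; [exact Hc|]. repeat (split; [assumption|]). assumption.
Qed.

Lemma M_union x : M x -> exists u, M u /\ forall y z, mem y x -> mem z y -> mem z u.
Proof.
  intro Hx. destruct (m_union _ _ _ HZ x Hx) as (u & Hu & _ & Hmem).
  exists u. split; [exact Hu|]. intros y z Hy Hz.
  assert (My : M y) by exact (HT x y Hx Hy).
  exact (Hmem y z My (HT y z My Hz) Hz Hy).
Qed.

Lemma M_binary_union x y : M x -> M y -> exists u, M u /\ forall z, mem z x \/ mem z y -> mem z u.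
Proof.
  intros Hx Hy. destruct (M_upair x y Hx Hy) as (t & Ht & _ & Htmem).
  destruct (M_union t Ht) as (u & Hu & Humem).
  exists u. split; [exact Hu|].
  intros z [Hz | Hz]; [apply (Humem x) | apply (Humem y)]; auto; apply Htmem; auto.
Qed.

Lemma M_opair_components x : M x -> exists u, M u /\
  forall a b, opair_mem x a b -> mem a u /\ mem b u.
Proof.
  intro Hx. destruct (M_union x Hx) as (u1 & Hu1 & Hu1mem).
  destruct (M_union u1 Hu1) as (u & Hu & Humem).
  exists u. split; [exact Hu|]. intros a b (c & Hc & Hcp).
  destruct (proj2 (pair_union c a b Hcp a) (or_introl eq_refl)) as (s & Hs & Ha).
  destruct (proj2 (pair_union c a b Hcp b) (or_intror eq_refl)) as (t & Ht & Hb).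
  split; [apply (Humem s) | apply (Humem t)]; eauto.
Qed.

Lemma M_pairs_superset B : M B -> exists A, M A /\ isSet atom A /\
  forall c y r, IsPair mem atom c y r -> mem y B -> mem r B -> mem c A.
Proof.
  intro HB. destruct (m_power _ _ _ HZ B HB) as (A1 & HA1 & _ & HA1mem).
  destruct (m_power _ _ _ HZ A1 HA1) as (A & HA & HAset & HAmem).
  exists A. split; [exact HA|]. split; [exact HAset|].
  intros c y r Hcp Hy Hr.
  assert (Mc : M c) by exact (pair_in_M c y r (HT B y HB Hy) (HT B r HB Hr) Hcp).
  apply HAmem; [exact Mc | exact (proj1 Hcp) |]. intros z Mz Hz.
  apply (proj2 Hcp) in Hz as Hzcases.
  apply HA1mem; [exact Mz | destruct Hzcases as [[Hzset _] | [Hzset _]]; exact Hzset |].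
  intros t _ Ht. destruct Hzcases as [[_ Hzmem] | [_ Hzmem]]; apply Hzmem in Ht.
  - subst t. exact Hy.
  - destruct Ht as [-> | ->]; assumption.
Qed.

Lemma mixture_in_M P Le f : M P -> M Le -> M f -> exists v, M v /\ IsMixture P Le f v.
Proof.
  intros HP HLe Hf.
  (* U1 contains the values w of f, U2 their elements, U3 the first components y. *)
  destruct (M_opair_components f Hf) as (U1 & HU1 & HU1mem).
  destruct (M_union U1 HU1) as (U2 & HU2 & HU2mem).
  destruct (M_opair_components U2 HU2) as (U3 & HU3 & HU3mem).
  destruct (M_binary_union U3 P HU3 HP) as (B & HB & HBmem).
  destruct (M_pairs_superset B HB) as (A & HA & HAset & HAmem).
  set (e := fun n => match n with 2 => P | 3 => Le | _ => f end).
  assert (He : forall n, M (e n)) by (intros [| [| [| [|]]]]; assumption).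
  destruct (m_sep _ _ _ HZ Fmix 0 e He A HA HAset) as (v & Hv & Hvset & Hvmem).
  exists v. split; [exact Hv|]. split; [exact Hvset|]. intro c.
  assert (Hsat : forall c, M c -> sat mem atom M (upd e 0 c) Fmix <->
                   exists y r, IsPair mem atom c y r /\ mix_entry P Le f y r).
  { intros c' Mc'. rewrite sat_Fmix by (apply upd_in_M; assumption). reflexivity. }
  split.
  - intro Hc. assert (Mc : M c) by exact (HT v c Hv Hc).
    apply Hsat; [exact Mc|]. apply (Hvmem c Mc). exact Hc.
  - intros (y & r & Hcp & Hentry). pose proof Hentry as (p & w & s & Hpw & Hys & Hr & _).
    destruct (opair_mem_in_M w y s (proj2 (opair_mem_in_M f p w Hf Hpw)) Hys) as [My _].
    assert (Mc : M c) by exact (pair_in_M c y r My (HT P r HP Hr) Hcp).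
    apply (Hvmem c Mc). split; [| apply Hsat; [exact Mc | exists y, r; auto]].
    apply (HAmem c y r Hcp); apply HBmem; [left | right; exact Hr].
    destruct Hys as (d & Hd & Hdp).
    apply (HU3mem y s). exists d. split; [| exact Hdp].
    destruct Hpw as (d' & Hd' & Hd'p).
    apply (HU2mem w d); [apply (HU1mem p w); exists d'; auto | exact Hd].
Qed.

End Relativization.
End ZFU.

Theorem mainTheorem13 (V : Type) (mem : V -> V -> Prop) (atom : V -> Prop)
  (HV : Ambient mem atom)
  (M : V -> Prop) (HM : CTM mem atom M)
  (P Le : V) (HP : ForcingPoset mem atom M P Le)
  (f : V) (HfM : M f) (Hfset : isSet atom f)
  (Hfpairs : forall c, mem c f -> exists p w, IsPair mem atom c p w)
  (Hffun : forall c d p w w', mem c f -> mem d f ->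
      IsPair mem atom c p w -> IsPair mem atom d p w' -> w = w')
  (HfdomP : forall c p w, mem c f -> IsPair mem atom c p w -> mem p P)
  (Hfanti : forall c d p w q w', mem c f -> mem d f ->
      IsPair mem atom c p w -> IsPair mem atom d q w' -> p <> q ->
      ~ compatible mem atom P Le p q)
  (Hfval : forall c p w, mem c f -> IsPair mem atom c p w ->
      M w /\ IsName mem atom P Le w) :
  exists v, M v /\ IsName mem atom P Le v /\
    forall c p w, mem c f -> IsPair mem atom c p w ->
      ForcesEq mem atom M P Le p v w.
Proof.
  destruct HM as (_ & HT & _ & HZ).
  pose proof HP as (HPM & HLeM & _).
  assert (Hffun' : forall p w w', opair_mem mem atom f p w -> opair_mem mem atom f p w' -> w = w')
    by (intros p w w' (c & Hc & Hcp) (d & Hd & Hdp); exact (Hffun c d p w w' Hc Hd Hcp Hdp)).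
  assert (Hfanti' : forall p w q w', opair_mem mem atom f p w -> opair_mem mem atom f q w' ->
            p <> q -> ~ compatible mem atom P Le p q)
    by (intros p w q w' (c & Hc & Hcp) (d & Hd & Hdq); exact (Hfanti c d p w q w' Hc Hd Hcp Hdq)).
  assert (Hfname : forall p w, opair_mem mem atom f p w -> IsName mem atom P Le w)
    by (intros p w (c & Hc & Hcp); exact (proj2 (Hfval c p w Hc Hcp))).
  destruct (mixture_in_M mem atom HV M HT HZ P Le f HPM HLeM HfM) as (v & Hv & Hmix).
  exists v. split; [exact Hv|]. split.
  - exact (mixture_name mem atom HV M P Le f HP Hffun' Hfanti' Hfname v Hmix).
  - intros c p w Hc Hcp.
    exact (mixture_forces mem atom HV M P Le f HP Hffun' Hfanti' Hfname v p w Hmix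
             (ex_intro _ c (conj Hc Hcp))).
Qed.
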